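(* Let $L$ be an algebraic frame, $X_L$ its Priestley space, and $Y_L$ the spatial part of $X_L$. The following are equivalent: (1) $L$ is an arithmetic frame; (2) $X_L$ is an arithmetic L-space; (3) $Y_L$ is a stably compactly based space.
   Context: A frame is a complete lattice satisfying $a\wedge\bigvee S=\bigvee\{a\wedge s\mid s\in S\}$. In a frame $L$, $a\ll b$ means whenever $b\le\bigvee S$ there is finite $T\subseteq S$ with $a\le\bigvee T$; $a$ is compact if $a\ll a$; $K(L)$ is the set of compact elements. $L$ is algebraic if $a=\bigvee\{b\in K(L)\mid b\le a\}$ for all $a$, and arithmetic if it is algebraic and $\ll$ is stable ($a\ll b$ and $a\ll c$ imply $a\ll b\wedge c$); equivalently, an algebraic frame in which the meet of two compact elements is compact. A Priestley space is a Stone space $X$ with a partial order such that clopen upsets separate points. An L-space is a Priestley space in which the downset of each clopen set is clopen and the closure of each open upset is open. ${\sf ClopUp}(X)$ is the set of clopen upsets; $\mathrm{cl}$ denotes closure. The Priestley space $X_L$ is the set of prime filters of $L$ ordered by inclusion with topology generated by the sets $\varphi(a)=\{x\mid a\in x\}$ and their complements. The spatial part of $X$ is $Y=\{y\in X\mid{\downarrow}y\text{ clopen}\}$, topologized by declaring $V\subseteq Y$ open iff $V=U\cap Y$ for some $U\in{\sf ClopUp}(X)$. A Scott upset is a closed upset $F$ with $\min F\subseteq Y$; ${\sf ClopSUp}(X)$ is the set of clopen Scott upsets. For $U,V\in{\sf ClopUp}(X)$, $V\ll U$ means that for every open upset $W$, $U\subseteq\mathrm{cl}\,W$ implies $V\subseteq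 W$; $\ker U=\bigcup\{V\in{\sf ClopUp}(X)\mid V\ll U\}$; $\mathrm{core}\,U=\bigcup\{V\in{\sf ClopSUp}(X)\mid V\subseteq U\}$. An algebraic L-space is one where $\mathrm{core}\,U$ is dense in $U$ for each $U\in{\sf ClopUp}(X)$; an arithmetic L-space is an algebraic L-space with $\ker(U\cap V)=\ker U\cap\ker V$ for all $U,V\in{\sf ClopUp}(X)$. A topological space is stably compactly based if it is sober, has a basis of compact open sets, and the intersection of any two compact open sets is compact. *)

From Stdlib Require Import List.
Set Implicit Arguments.
Unset Strict Implicit.

Record Frame := {
  fcar :> Type;
  fle : fcar -> fcar -> Prop;
  fle_refl : forall a, fle a a;
  fle_trans : forall a b c, fle a b -> fle b c -> fle a c;
  fle_antisym : forall a b, fle a b -> fle b a -> a = b;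
  fsup : (fcar -> Prop) -> fcar;
  fsup_ub : forall (S : fcar -> Prop) a, S a -> fle a (fsup S);
  fsup_least : forall (S : fcar -> Prop) b,
      (forall a, S a -> fle a b) -> fle (fsup S) b;
  fmeet : fcar -> fcar -> fcar;
  fmeet_lb_l : forall a b, fle (fmeet a b) a;
  fmeet_lb_r : forall a b, fle (fmeet a b) b;
  fmeet_glb : forall a b c, fle c a -> fle c b -> fle c (fmeet a b);
  fdistr : forall a (S : fcar -> Prop),
      fmeet a (fsup S) = fsup (fun c => exists s, S s /\ c = fmeet a s)
}.

Section FrameDefs.
Variable L : Frame.

Definition ftop : L := fsup (fun _ : L => True).
Definition fbot : L := fsup (fun _ : L => False).
Definition fjoin (a b : L) : L := fsup (fun c => c = a \/ c = b).

Definition way_below (a b : L) : Prop :=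
  forall S : L -> Prop, fle b (fsup S) ->
    exists T : list L, (forall t, In t T -> S t) /\
                       fle a (fsup (fun t => In t T)).

Definition compact_el (a : L) : Prop := way_below a a.

Definition algebraic_frame : Prop :=
  forall a : L, a = fsup (fun b => compact_el b /\ fle b a).

Definition arithmetic_frame : Prop :=
  algebraic_frame /\
  forall a b c : L, way_below a b -> way_below a c -> way_below a (fmeet b c).

Definition prime_filter (x : L -> Prop) : Prop :=
  (forall a b, x a -> fle a b -> x b) /\
  x ftop /\
  (forall a b, x a -> x b -> x (fmeet a b)) /\
  ~ x fbot /\
  (forall a b, x (fjoin a b) -> x a \/ x b).
End FrameDefs.

Section Topology.
Variable T : Type.
Variable O : (T -> Prop) -> Prop.

Definition is_topology : Prop :=
  O (fun _ => True) /\
  (forall U V, O U -> O V -> O (fun x => U x /\ V x)) /\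
  (forall C : (T -> Prop) -> Prop, (forall U, C U -> O U) ->
     O (fun x => exists U, C U /\ U x)).

Definition closed_set (A : T -> Prop) : Prop := O (fun x => ~ A x).
Definition clopen (A : T -> Prop) : Prop := O A /\ closed_set A.

Definition closure (A : T -> Prop) : T -> Prop :=
  fun x => forall U, O U -> U x -> exists y, U y /\ A y.

Definition compact_set (K : T -> Prop) : Prop :=
  forall C : (T -> Prop) -> Prop, (forall U, C U -> O U) ->
    (forall x, K x -> exists U, C U /\ U x) ->
    exists l : list (T -> Prop), (forall U, In U l -> C U) /\
      (forall x, K x -> exists U, In U l /\ U x).

Definition hausdorff : Prop :=
  forall x y : T, x <> y -> exists U V, O U /\ O V /\ U x /\ V y /\
    (forall z, U z -> V z -> False).

Definition zero_dimensional : Prop :=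
  forall U, O U -> forall x, U x ->
    exists C, clopen C /\ C x /\ (forall z, C z -> U z).

Definition stone_space : Prop :=
  is_topology /\ compact_set (fun _ => True) /\ hausdorff /\ zero_dimensional.

Definition irreducible_closed (F : T -> Prop) : Prop :=
  closed_set F /\ (exists x, F x) /\
  forall G H, closed_set G -> closed_set H ->
    (forall x, F x -> G x \/ H x) ->
    (forall x, F x -> G x) \/ (forall x, F x -> H x).

Definition sober : Prop :=
  forall F, irreducible_closed F ->
    exists y, (forall z, F z <-> closure (fun w => w = y) z) /\
      forall y', (forall z, F z <-> closure (fun w => w = y') z) -> y' = y.

Definition stably_compactly_based : Prop :=
  sober /\
  (forall U, O U -> forall x, U x ->
     exists K, O K /\ compact_set K /\ K x /\ (forall z, K z -> U z)) /\
  (forall K1 K2, O K1 -> compact_set K1 -> O K2 -> compact_set K2 ->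
     compact_set (fun x => K1 x /\ K2 x)).

Variable le : T -> T -> Prop.

Definition upset (A : T -> Prop) : Prop := forall x y, A x -> le x y -> A y.
Definition downset_of (A : T -> Prop) : T -> Prop :=
  fun x => exists y, A y /\ le x y.
Definition clopen_upset (A : T -> Prop) : Prop := clopen A /\ upset A.

Definition partial_order : Prop :=
  (forall x, le x x) /\ (forall x y z, le x y -> le y z -> le x z) /\
  (forall x y, le x y -> le y x -> x = y).

Definition priestley_space : Prop :=
  stone_space /\ partial_order /\
  forall x y, ~ le x y -> exists U, clopen_upset U /\ U x /\ ~ U y.

Definition L_space : Prop :=
  priestley_space /\
  (forall A, clopen A -> clopen (downset_of A)) /\
  (forall W, O W -> upset W -> O (closure W)).

Definition spatial_pt (y : T) : Prop := clopen (downset_of (fun w => w = y)).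

Definition minimal_in (F : T -> Prop) (x : T) : Prop :=
  F x /\ forall z, F z -> le z x -> z = x.

Definition scott_upset (F : T -> Prop) : Prop :=
  closed_set F /\ upset F /\ forall x, minimal_in F x -> spatial_pt x.

Definition clopen_scott_upset (F : T -> Prop) : Prop :=
  clopen F /\ scott_upset F.

Definition sp_way_below (V U : T -> Prop) : Prop :=
  forall W, O W -> upset W -> (forall x, U x -> closure W x) ->
    forall x, V x -> W x.

Definition ker (U : T -> Prop) : T -> Prop :=
  fun x => exists V, clopen_upset V /\ sp_way_below V U /\ V x.

Definition core (U : T -> Prop) : T -> Prop :=
  fun x => exists V, clopen_scott_upset V /\ (forall z, V z -> U z) /\ V x.

Definition algebraic_L_space : Prop :=
  L_space /\
  forall U, clopen_upset U -> forall x, U x -> closure (core U) x.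

Definition arithmetic_L_space : Prop :=
  algebraic_L_space /\
  forall U V, clopen_upset U -> clopen_upset V ->
    forall x, ker (fun z => U z /\ V z) x <-> (ker U x /\ ker V x).
End Topology.

Section PriestleyOfFrame.
Variable L : Frame.

Definition XL : Type := { x : L -> Prop | prime_filter x }.

Definition XL_le (x y : XL) : Prop :=
  forall a, proj1_sig x a -> proj1_sig y a.

Definition phi (a : L) : XL -> Prop := fun x => proj1_sig x a.

Definition XL_subbasic (S : XL -> Prop) : Prop :=
  exists a, (forall x, S x <-> phi a x) \/ (forall x, S x <-> ~ phi a x).

Definition XL_open (U : XL -> Prop) : Prop :=
  forall x, U x -> exists l : list (XL -> Prop),
    (forall S, In S l -> XL_subbasic S) /\ (forall S, In S l -> S x) /\
    (forall z, (forall S, In S l -> S z) -> U z).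

Definition YL : Type := { y : XL | spatial_pt XL_open XL_le y }.

Definition YL_open (V : YL -> Prop) : Prop :=
  exists U : XL -> Prop, clopen_upset XL_open XL_le U /\
    forall y : YL, V y <-> U (proj1_sig y).
End PriestleyOfFrame.

From Stdlib Require Import List Classical ProofIrrelevance.
From mathcomp Require boolp classical_sets.

(* Everything is read off the duality between L and X_L.  Clopen upsets of X_L are
   exactly the sets phi a; spatial points are the completely prime filters; for compact k,
   phi k is a clopen Scott upset; and phi b << phi a in X_L iff b << a in L, so ker phi a
   is the union of the phi b with b << a and ker commutes with intersections iff << is
   stable.  On Y_L the opens are the traces of the phi a, and since the spatial points
   separate elements of an algebraic frame, the compact opens are the traces of the
   compact elements; an irreducible closed set with complement phi a is the closure of
   the point {t | ~ t <= a}, which gives sobriety.  So both (2) and (3) say that the meet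
   of two compact elements is compact, which is (1). *)

(** * Zorn's lemma and the Alexander subbasis lemma *)

Definition subset {T : Type} (A B : T -> Prop) := forall x, A x -> B x.

Definition chain {T : Type} (C : (T -> Prop) -> Prop) :=
  forall S1 S2, C S1 -> C S2 -> subset S1 S2 \/ subset S2 S1.

Definition bigunion {T : Type} (C : (T -> Prop) -> Prop) : T -> Prop :=
  fun x => exists S, C S /\ S x.

Lemma zorn_above (T : Type) (P : (T -> Prop) -> Prop) (A : T -> Prop) :
  P A ->
  (forall C, (exists S, C S) -> (forall S, C S -> P S /\ subset A S) -> chain C ->
     P (bigunion C)) ->
  exists M, P M /\ subset A M /\ forall S, P S -> subset M S -> subset S M.
Proof.
  intros PA Hchain.
  set (E := {S : T -> Prop | P S /\ subset A S}).
  set (R := fun s t : E => boolp.asbool (subset (proj1_sig s) (proj1_sig t))).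
  assert (RP : forall s t, R s t = true <-> subset (proj1_sig s) (proj1_sig t)).
  { intros s t. unfold R.
    destruct (boolp.asboolP (subset (proj1_sig s) (proj1_sig t))); split; easy. }
  destruct (@classical_sets.Zorn E R) as [[M [PM AM]] Mmax].
  - intro t. apply RP. intros x h; exact h.
  - intros r s t h1 h2. apply RP. apply RP in h1, h2. intros x h; auto.
  - intros [S1 h1] [S2 h2] e1 e2. apply RP in e1, e2. simpl in *.
    assert (S1 = S2) as <- by (apply boolp.funext; intro x; apply boolp.propext; split; auto).
    f_equal. apply proof_irrelevance.
  - intros D Dch.
    destruct (classic (exists s, D s)) as [[s0 Ds0]|ND].
    + set (C := fun S => exists s, D s /\ proj1_sig s = S).
      assert (PU : P (bigunion C)).
      { apply Hchain.
        - exists (proj1_sig s0), s0; auto.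
        - intros S [s [_ <-]]. exact (proj2_sig s).
        - intros S1 S2 [s1 [h1 <-]] [s2 [h2 <-]].
          destruct (Dch s1 s2 h1 h2) as [e|e]; apply RP in e; auto. }
      assert (AU : subset A (bigunion C)).
      { intros x h. exists (proj1_sig s0). split; [exists s0; auto|].
        exact (proj2 (proj2_sig s0) x h). }
      exists (exist (fun S => P S /\ subset A S) _ (conj PU AU)).
      intros s Ds. apply RP. intros x h. exists (proj1_sig s). split; [exists s|]; auto.
    + exists (exist (fun S => P S /\ subset A S) A (conj PA (fun x h => h))).
      intros s Ds. exfalso; eauto.
  - exists M. split; [exact PM|split; [exact AM|]]. intros S PS MS.
    set (s := exist (fun S => P S /\ subset A S) S (conj PS (fun x h => MS x (AM x h)))).
    assert (e : s = exist _ M (conj PM AM)) by (apply Mmax, RP; exact MS).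
    injection e as ->. intros x h; exact h.
Qed.

Lemma list_choice {A B : Type} {R : A -> B -> Prop} {l : list A} :
  (forall a, In a l -> exists b, R a b) ->
  exists l', (forall b, In b l' -> exists a, In a l /\ R a b) /\
             (forall a, In a l -> exists b, In b l' /\ R a b).
Proof.
  induction l as [|a l IH]; intro H.
  - exists nil. split; intros _ [].
  - destruct IH as [l' [h1 h2]]; [intros; apply H; right; auto|].
    destruct (H a (or_introl eq_refl)) as [b hb].
    exists (b :: l'). split.
    + intros b' [<-|h]; [exists a; split; [left|]; auto|].
      destruct (h1 b' h) as [a' [? ?]]. exists a'. split; [right|]; auto.
    + intros a' [<-|h]; [exists b; split; [left|]; auto|].
      destruct (h2 a' h) as [b' [? ?]]. exists b'. split; [right|]; auto.
Qed.

Lemma chain_list_bound {T : Type} {Ch : ((T -> Prop) -> Prop) -> Prop} {l : list (T -> Prop)} :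
  (exists D, Ch D) -> chain Ch -> (forall U, In U l -> bigunion Ch U) ->
  exists D, Ch D /\ forall U, In U l -> D U.
Proof.
  intros [D0 HD0] Hch. induction l as [|U l IH]; intro H.
  - exists D0. split; [exact HD0|intros _ []].
  - destruct IH as [D [HD HDl]]; [intros; apply H; right; auto|].
    destruct (H U (or_introl eq_refl)) as [D' [HD' D'U]].
    destruct (Hch D D' HD HD') as [s|s].
    + exists D'. split; [exact HD'|]. intros V [<-|hV]; auto.
    + exists D. split; [exact HD|]. intros V [<-|hV]; auto.
Qed.

Section Compactness.
Context {T : Type}.

Definition finite_subcover (C : (T -> Prop) -> Prop) (K : T -> Prop) :=
  exists l, (forall U, In U l -> C U) /\ forall x, K x -> exists U, In U l /\ U x.

Lemma finite_subcover_remove {C : (T -> Prop) -> Prop} {S l} :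
  (forall V, In V l -> C V \/ V = S) ->
  exists m, (forall V, In V m -> C V) /\
    forall x, (exists V, In V l /\ V x) -> S x \/ exists V, In V m /\ V x.
Proof.
  induction l as [|V l IH]; intro H.
  - exists nil. split; [intros _ []|intros x [V [[] _]]].
  - destruct IH as [m [h1 h2]]; [intros; apply H; right; auto|].
    destruct (H V (or_introl eq_refl)) as [hV| ->].
    + exists (V :: m). split; [intros W [<-|h]; auto|].
      intros x [W [[<-|h] h']]; [right; exists V; split; [left|]; auto|].
      destruct (h2 x) as [k|[W' [? ?]]]; eauto. right. exists W'. split; [right|]; auto.
    + exists m. split; [exact h1|]. intros x [W [[<-|h] h']]; [left; auto|eauto].
Qed.

Lemma closed_compact (O : (T -> Prop) -> Prop) K :
  compact_set O (fun _ => True) -> closed_set O K -> compact_set O K.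
Proof.
  intros HX HK C HC Hcov.
  destruct (HX (fun U => C U \/ U = (fun x => ~ K x))) as [l [h1 h2]].
  - intros U [h| ->]; auto.
  - intros x _. destruct (classic (K x)) as [k|k].
    + destruct (Hcov x k) as [U [? ?]]. eauto.
    + exists (fun x => ~ K x). auto.
  - destruct (finite_subcover_remove h1) as [m [m1 m2]].
    exists m. split; [exact m1|]. intros x Kx.
    destruct (m2 x (h2 x I)) as [k|k]; [contradiction|exact k].
Qed.

Variable B : (T -> Prop) -> Prop.

Definition generated_topology (U : T -> Prop) : Prop :=
  forall x, U x -> exists l : list (T -> Prop),
    (forall S, In S l -> B S) /\ (forall S, In S l -> S x) /\
    (forall z, (forall S, In S l -> S z) -> U z).

Lemma subbasic_generated_open S : B S -> generated_topology S.
Proof.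
  intros HS x Sx. exists (S :: nil).
  split; [intros S' [<-|[]]; auto|split; [intros S' [<-|[]]; auto|]].
  intros z h. apply h. left; auto.
Qed.

Let no_finite_subcover (D : (T -> Prop) -> Prop) :=
  (forall U, D U -> generated_topology U) /\ ~ finite_subcover D (fun _ => True).

(* A maximal family without finite subcover is covered by its subbasic members:
   otherwise every subbasic set around an uncovered point, added to the family,
   yields a finite subcover, and together these cover a basic neighbourhood. *)
Lemma maximal_subbasic_cover {M} :
  no_finite_subcover M ->
  (forall D, no_finite_subcover D -> subset M D -> subset D M) ->
  (forall x, exists U, M U /\ U x) ->
  forall x, exists S, (M S /\ B S) /\ S x.
Proof.
  intros [MO MN] Mmax Mcov x. apply NNPP. intro Hx.
  destruct (Mcov x) as [U [MU Ux]].
  destruct (MO U MU x Ux) as [l [lB [lx lU]]].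
  assert (Hl : forall S, In S l -> exists m, (forall V, In V m -> M V) /\
                 forall z, S z \/ exists V, In V m /\ V z).
  { intros S hS.
    assert (nS : ~ M S).
    { intro hM. apply Hx. exists S. split; [split|]; [exact hM|apply lB, hS|apply lx, hS]. }
    assert (Fc : finite_subcover (fun V => M V \/ V = S) (fun _ => True)).
    { apply NNPP. intro N. apply nS.
      apply (Mmax (fun V => M V \/ V = S)); [|intros V h; auto|auto].
      split; [|exact N]. intros V [h| ->]; auto. apply subbasic_generated_open; auto. }
    destruct Fc as [l' [k1 k2]].
    destruct (finite_subcover_remove k1) as [m [n1 n2]].
    exists m. split; [exact n1|]. intro z. apply n2, k2; exact I. }
  destruct (list_choice Hl) as [ms [hms1 hms2]].
  apply MN. exists (U :: concat ms). split.
  - intros V [<-|h]; [exact MU|].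
    apply in_concat in h as [m [hm hV]].
    destruct (hms1 m hm) as [S [_ [hmM _]]]. auto.
  - intros z _. destruct (classic (forall S, In S l -> S z)) as [hz|hz].
    + exists U. split; [left; auto|]. auto.
    + apply not_all_ex_not in hz as [S hz]. apply imply_to_and in hz as [hS nSz].
      destruct (hms2 S hS) as [m [hm [_ hmz]]].
      destruct (hmz z) as [|[V [hV Vz]]]; [contradiction|].
      exists V. split; [right; apply in_concat; eauto|exact Vz].
Qed.

Lemma alexander_subbasis :
  (forall C, (forall S, C S -> B S) -> (forall x, exists S, C S /\ S x) ->
     finite_subcover C (fun _ => True)) ->
  compact_set generated_topology (fun _ => True).
Proof.
  intros HB C HC Hcov. apply NNPP. intro Nfin.
  destruct (zorn_above _ no_finite_subcover C) as [M [PM [CM Mmax]]].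
  - split; [exact HC|exact Nfin].
  - intros Ch [D0 HD0] HCh Hch. split.
    + intros U [D [hD hU]]. exact (proj1 (proj1 (HCh D hD)) U hU).
    + intros [l [hl hcov]].
      destruct (chain_list_bound (Ch := Ch) (l := l)) as [D [HD HDl]]; eauto.
      apply (proj2 (proj1 (HCh D HD))). exists l. auto.
  - assert (Mcov : forall x, exists U, M U /\ U x)
      by (intro x; destruct (Hcov x I) as [U [? ?]]; exists U; auto).
    pose proof (maximal_subbasic_cover PM Mmax Mcov) as HMB.
    destruct (HB (fun S => M S /\ B S)) as [l [hl hcov]]; [tauto|exact HMB|].
    apply (proj2 PM). exists l. split; [intros U hU; apply hl; exact hU|exact hcov].
Qed.
End Compactness.

(** * Frames, filters and ideals *)

Section Duality.
Variable L : Frame.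
Local Notation "a ⊑ b" := (@fle L a b) (at level 70).
Local Notation sup := (@fsup L).
Local Notation meet := (@fmeet L).
Local Notation join := (@fjoin L).
Local Notation top := (ftop L).
Local Notation bot := (fbot L).
Local Notation wb := (@way_below L).
Hint Resolve fle_refl fmeet_lb_l fmeet_lb_r : core.

Lemma le_trans {a b c} : a ⊑ b -> b ⊑ c -> a ⊑ c.
Proof. apply fle_trans. Qed.

Lemma sup_mono {S T : L -> Prop} : subset S T -> sup S ⊑ sup T.
Proof. intro H. apply fsup_least. intros a Ha. apply fsup_ub. auto. Qed.

Lemma join_l a b : a ⊑ join a b.
Proof. apply fsup_ub. auto. Qed.

Lemma join_r a b : b ⊑ join a b.
Proof. apply fsup_ub. auto. Qed.

Lemma join_least {a b c} : a ⊑ c -> b ⊑ c -> join a b ⊑ c.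
Proof. intros. apply fsup_least. intros x [-> | ->]; auto. Qed.

Lemma join_mono {a b c d} : a ⊑ c -> b ⊑ d -> join a b ⊑ join c d.
Proof.
  intros. apply join_least; eapply le_trans; eauto using join_l, join_r.
Qed.

Lemma bot_le a : bot ⊑ a.
Proof. apply fsup_least. intros x []. Qed.

Lemma le_top a : a ⊑ top.
Proof. apply fsup_ub. auto. Qed.

Lemma meet_mono {a b c d} : a ⊑ c -> b ⊑ d -> meet a b ⊑ meet c d.
Proof.
  intros. apply fmeet_glb;
    [eapply le_trans; [apply fmeet_lb_l|]|eapply le_trans; [apply fmeet_lb_r|]]; assumption.
Qed.

Lemma meet_comm_le a b : meet a b ⊑ meet b a.
Proof. apply fmeet_glb; auto. Qed.

Lemma meet_sup_le {a} {S : L -> Prop} {b} :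
  (forall s, S s -> meet a s ⊑ b) -> meet a (sup S) ⊑ b.
Proof.
  intro H. rewrite fdistr. apply fsup_least. intros c [s [Hs ->]]. auto.
Qed.

Lemma meet_join_le a b c : meet a (join b c) ⊑ join (meet a b) (meet a c).
Proof. apply meet_sup_le. intros s [-> | ->]; auto using join_l, join_r. Qed.

Definition ljoin (l : list L) : L := sup (fun t => In t l).

Fixpoint lmeet (l : list L) : L :=
  match l with nil => top | a :: l => meet a (lmeet l) end.

Lemma ljoin_ub l t : In t l -> t ⊑ ljoin l.
Proof. intro. apply fsup_ub. auto. Qed.

Lemma ljoin_least {l b} : (forall t, In t l -> t ⊑ b) -> ljoin l ⊑ b.
Proof. intro. apply fsup_least. auto. Qed.

Lemma ljoin_cons a l : ljoin (a :: l) ⊑ join a (ljoin l).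
Proof.
  apply ljoin_least. intros t [<-|H]; [apply join_l|].
  eapply le_trans; [apply ljoin_ub; eauto|apply join_r].
Qed.

Lemma join_ljoin_app l1 l2 : join (ljoin l1) (ljoin l2) ⊑ ljoin (l1 ++ l2).
Proof. apply join_least; apply sup_mono; intros t ?; apply in_or_app; auto. Qed.

Lemma lmeet_lb l t : In t l -> lmeet l ⊑ t.
Proof.
  induction l as [|a l IH]; simpl; [intros []|intros [<-|H]]; auto.
  eapply le_trans; [apply fmeet_lb_r|auto].
Qed.

Lemma lmeet_glb {l b} : (forall t, In t l -> b ⊑ t) -> b ⊑ lmeet l.
Proof.
  induction l as [|a l IH]; simpl; intro H; [apply le_top|].
  apply fmeet_glb; auto.
Qed.

Lemma lmeet_app_meet l1 l2 : lmeet (l1 ++ l2) ⊑ meet (lmeet l1) (lmeet l2).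
Proof. apply fmeet_glb; apply lmeet_glb; intros; apply lmeet_lb, in_or_app; auto. Qed.

Definition imp (a b : L) : L := sup (fun c => meet c a ⊑ b).

Lemma imp_mp a b : meet (imp a b) a ⊑ b.
Proof.
  eapply le_trans; [apply meet_comm_le|]. apply meet_sup_le.
  intros s hs. eapply le_trans; [apply meet_comm_le|exact hs].
Qed.

Lemma imp_intro {a b c} : meet c a ⊑ b -> c ⊑ imp a b.
Proof. intro. apply fsup_ub. auto. Qed.

Definition is_filter (F : L -> Prop) :=
  (forall a b, F a -> a ⊑ b -> F b) /\ F top /\
  (forall a b, F a -> F b -> F (meet a b)).

Definition is_ideal (J : L -> Prop) :=
  (forall a b, J b -> a ⊑ b -> J a) /\ J bot /\
  (forall a b, J a -> J b -> J (join a b)).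

Definition disjoint (F J : L -> Prop) := forall a, F a -> J a -> False.

Definition up (a : L) : L -> Prop := fun c => a ⊑ c.

Definition down (b : L) : L -> Prop := fun c => c ⊑ b.

Definition filter_gen (A : L -> Prop) : L -> Prop :=
  fun c => exists l, (forall t, In t l -> A t) /\ lmeet l ⊑ c.

Definition ideal_gen (A : L -> Prop) : L -> Prop :=
  fun c => exists l, (forall t, In t l -> A t) /\ c ⊑ ljoin l.

Lemma up_filter a : is_filter (up a).
Proof.
  split; [|split]; unfold up; intros; [eapply le_trans; eauto|apply le_top|].
  apply fmeet_glb; auto.
Qed.

Lemma down_ideal b : is_ideal (down b).
Proof.
  split; [|split]; unfold down; intros; [eapply le_trans; eauto|apply bot_le|].
  apply join_least; auto.
Qed.

Lemma filter_gen_filter A : is_filter (filter_gen A).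
Proof.
  split; [|split].
  - intros c d [l [h1 h2]] h. exists l. split; [exact h1|eapply le_trans; eauto].
  - exists nil. split; [intros _ []|apply le_top].
  - intros c d [l [h1 h2]] [l' [h1' h2']]. exists (l ++ l'). split.
    + intros t h. apply in_app_or in h as [h|h]; auto.
    + eapply le_trans; [apply lmeet_app_meet|]. apply meet_mono; auto.
Qed.

Lemma ideal_gen_ideal A : is_ideal (ideal_gen A).
Proof.
  split; [|split].
  - intros c d [l [h1 h2]] h. exists l. split; [exact h1|eapply le_trans; eauto].
  - exists nil. split; [intros _ []|apply bot_le].
  - intros c d [l [h1 h2]] [l' [h1' h2']]. exists (l ++ l'). split.
    + intros t h. apply in_app_or in h as [h|h]; auto.
    + eapply le_trans; [|apply join_ljoin_app]. apply join_mono; auto.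
Qed.

Lemma ideal_ljoin {J l} : is_ideal J -> (forall t, In t l -> J t) -> J (ljoin l).
Proof.
  intros [J1 [J2 J3]]. induction l as [|a l IH]; intro H.
  - apply J1 with bot; [exact J2|]. apply ljoin_least. intros t [].
  - apply J1 with (join a (ljoin l)); [|apply ljoin_cons].
    apply J3; [apply H; left|apply IH; intros; apply H; right]; auto.
Qed.

Section PrimeFilter.
Context {x : L -> Prop} (Hx : prime_filter x).

Lemma pf_up a b : x a -> a ⊑ b -> x b.
Proof. apply (proj1 Hx). Qed.

Lemma pf_top : x top.
Proof. apply (proj1 (proj2 Hx)). Qed.

Lemma pf_not_bot : ~ x bot.
Proof. apply (proj1 (proj2 (proj2 (proj2 Hx)))). Qed.

Lemma pf_meet a b : x (meet a b) <-> x a /\ x b.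
Proof.
  split; [intro h; split; eapply pf_up; eauto|].
  intros [h1 h2]. apply (proj1 (proj2 (proj2 Hx))); auto.
Qed.

Lemma pf_join a b : x (join a b) <-> x a \/ x b.
Proof.
  split; [apply (proj2 (proj2 (proj2 (proj2 Hx))))|].
  intros [h|h]; eapply pf_up; eauto using join_l, join_r.
Qed.

Lemma pf_ljoin l : x (ljoin l) -> exists t, In t l /\ x t.
Proof.
  induction l as [|a l IH]; intro h.
  - exfalso. apply pf_not_bot. eapply pf_up; [exact h|].
    apply ljoin_least. intros t [].
  - apply (fun h => pf_up _ _ h (ljoin_cons a l)) in h.
    apply pf_join in h as [h|h]; [exists a; split; [left|]; auto|].
    destruct (IH h) as [t [? ?]]. exists t. split; [right|]; auto.
Qed.

Lemma pf_lmeet l : x (lmeet l) <-> forall t, In t l -> x t.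
Proof.
  induction l as [|a l IH]; simpl.
  - split; [intros _ t []|intros; apply pf_top].
  - rewrite pf_meet, IH. split; [intros [h1 h2] t [<-|h]; auto|intro h; split; auto].
Qed.
End PrimeFilter.

Definition maximal_disjoint_ideal (F J : L -> Prop) :=
  is_ideal J /\ disjoint F J /\
  forall J', is_ideal J' -> disjoint F J' -> subset J J' -> subset J' J.

Lemma maximal_disjoint_ideal_exists {F I} :
  is_ideal I -> disjoint F I -> exists J, subset I J /\ maximal_disjoint_ideal F J.
Proof.
  intros HI HFI.
  destruct (zorn_above _ (fun J => is_ideal J /\ disjoint F J) I)
    as [J [[HJ DJ] [IJ Jmax]]].
  - split; auto.
  - intros C [J0 CJ0] HC Hch.
    assert (Cideal : forall S, C S -> is_ideal S) by (intros S CS; apply (HC S CS)).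
    split.
    + split; [|split].
      * intros a b [S [CS Sb]] hab. exists S. split; [exact CS|].
        apply (proj1 (Cideal S CS) a b Sb hab).
      * exists J0. split; [exact CJ0|apply (Cideal J0 CJ0)].
      * intros a b [S1 [C1 h1]] [S2 [C2 h2]].
        destruct (Hch S1 S2 C1 C2) as [s|s].
        -- exists S2. split; [exact C2|]. apply (Cideal S2 C2); auto.
        -- exists S1. split; [exact C1|]. apply (Cideal S1 C1); auto.
    + intros a Fa [S [CS Sa]]. exact (proj2 (proj1 (HC S CS)) a Fa Sa).
  - exists J. split; [exact IJ|]. split; [exact HJ|split; [exact DJ|]].
    intros J' HJ' DJ'. apply Jmax. split; auto.
Qed.

(* Maximality forces every a outside J to satisfy f ⊑ j ∨ a for some f in F and j in J,
   since the ideal generated by J and a must meet F. *)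
Lemma maximal_disjoint_ideal_escape {F J a} :
  maximal_disjoint_ideal F J -> ~ J a -> exists f j, F f /\ J j /\ f ⊑ join j a.
Proof.
  intros [[J1 [J2 J3]] [D M]] na. apply NNPP. intro N.
  set (J' := fun c => exists j, J j /\ c ⊑ join j a).
  assert (S : subset J' J).
  { apply M.
    - split; [|split].
      + intros c d [j [h1 h2]] h. exists j. split; [exact h1|eapply le_trans; eauto].
      + exists bot. split; [exact J2|apply bot_le].
      + intros c d [j [h1 h2]] [j' [h1' h2']]. exists (join j j'). split; [auto|].
        apply join_least; [eapply le_trans; [exact h2|]|eapply le_trans; [exact h2'|]];
          apply join_mono; auto using join_l, join_r.
    - intros c Fc [j [h1 h2]]. apply N. exists c, j. auto.
    - intros c h. exists c. split; [exact h|apply join_l]. }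
  apply na, S. exists bot. split; [exact J2|apply join_r].
Qed.

Lemma maximal_disjoint_ideal_prime {F J} :
  is_filter F -> maximal_disjoint_ideal F J -> prime_filter (fun a => ~ J a).
Proof.
  intros [F1 [F2 F3]] HM. pose proof HM as [[J1 [J2 J3]] [D _]].
  split; [|split; [|split; [|split]]].
  - intros a b na hab jb. apply na. eauto.
  - intro h. eapply D; eauto.
  - intros a b na nb jab.
    destruct (maximal_disjoint_ideal_escape HM na) as [f [j [Ff [Jj Hf]]]].
    destruct (maximal_disjoint_ideal_escape HM nb) as [f' [j' [Ff' [Jj' Hf']]]].
    apply (D (meet f f')); [auto|].
    apply J1 with (b := join (join j j') (meet a b)); [apply J3; auto|].
    assert (h1 : meet f f' ⊑ meet (join (join j j') a) (join (join j j') b)).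
    { apply meet_mono; [eapply le_trans; [exact Hf|]|eapply le_trans; [exact Hf'|]];
        apply join_mono; auto using join_l, join_r. }
    eapply le_trans; [exact h1|]. eapply le_trans; [apply meet_join_le|].
    apply join_least; [eapply le_trans; [apply fmeet_lb_r|apply join_l]|].
    eapply le_trans; [apply meet_comm_le|].
    eapply le_trans; [apply meet_join_le|]. apply join_mono; [auto|apply meet_comm_le].
  - intro h. apply h. exact J2.
  - intros a b h. apply NNPP. intro N. apply h, J3; apply NNPP; intro; apply N; auto.
Qed.

(* For a compact k, the ideal of elements below joins of subsets of J stays disjoint
   from up k, so by maximality it is J itself. *)
Lemma maximal_disjoint_ideal_completely_prime {k J} (S : L -> Prop) :
  compact_el k -> maximal_disjoint_ideal (up k) J -> ~ J (sup S) -> exists s, S s /\ ~ J s.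
Proof.
  intros Hk [HJ [D M]] N. apply NNPP. intro N'.
  set (J' := fun c => exists S', subset S' J /\ c ⊑ sup S').
  assert (HJ' : subset J' J).
  { apply M.
    - split; [|split].
      + intros c d [S' [h1 h2]] h. exists S'. split; [exact h1|eapply le_trans; eauto].
      + exists (fun _ => False). split; [intros s []|apply bot_le].
      + intros c d [S1 [h1 h2]] [S2 [k1 k2]]. exists (fun s => S1 s \/ S2 s). split.
        * intros s [h|h]; auto.
        * apply join_least; [eapply le_trans; [exact h2|]|eapply le_trans; [exact k2|]];
            apply sup_mono; intros s h; auto.
    - intros c hc [S' [h1 h2]].
      destruct (Hk S' (le_trans hc h2)) as [T [k1 k2]].
      apply (D k); [apply fle_refl|]. apply (proj1 HJ) with (b := ljoin T); [|exact k2].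
      apply ideal_ljoin; [exact HJ|]. intros t ht. apply h1, k1, ht.
    - intros c hc. exists (fun s => s = c). split; [intros s ->; exact hc|apply fsup_ub; auto]. }
  apply N, HJ'. exists S. split; [|apply fle_refl].
  intros s hs. apply NNPP. intro ns. apply N'. eauto.
Qed.

Lemma wb_mono_l {b' b a} : b' ⊑ b -> wb b a -> wb b' a.
Proof.
  intros h H S hS. destruct (H S hS) as [T [h1 h2]].
  exists T. split; [exact h1|eapply le_trans; eauto].
Qed.

Lemma wb_mono_r {b a a'} : a ⊑ a' -> wb b a -> wb b a'.
Proof. intros h H S hS. apply H. eapply le_trans; eauto. Qed.

Lemma wb_ljoin {T a} : (forall t, In t T -> wb t a) -> wb (ljoin T) a.
Proof.
  intros H S hS.
  assert (HT : forall t, In t T -> exists l, (forall s, In s l -> S s) /\ t ⊑ ljoin l)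
    by (intros t ht; exact (H t ht S hS)).
  destruct (list_choice HT) as [ls [h1 h2]].
  exists (concat ls). split.
  - intros s hs. apply in_concat in hs as [l [hl hs]].
    destruct (h1 l hl) as [t [_ [hlS _]]]. auto.
  - apply ljoin_least. intros t ht. destruct (h2 t ht) as [l [hl [_ htl]]].
    eapply le_trans; [exact htl|]. apply sup_mono. intros s hs. apply in_concat; eauto.
Qed.

Lemma wb_compact_iff (Halg : algebraic_frame L) b a :
  wb b a <-> exists k, compact_el k /\ b ⊑ k /\ k ⊑ a.
Proof.
  split.
  - intro H. destruct (H (fun k => compact_el k /\ k ⊑ a)) as [T [h1 h2]].
    + rewrite <- (Halg a). apply fle_refl.
    + exists (ljoin T). split; [|split; [exact h2|apply ljoin_least; apply h1]].
      apply wb_ljoin. intros t ht. eapply wb_mono_r; [apply ljoin_ub; eauto|apply (h1 t ht)].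
  - intros [k [h1 [h2 h3]]]. eapply wb_mono_l; [exact h2|]. eapply wb_mono_r; eauto.
Qed.

(** * The Priestley space X_L *)

Local Notation X := (XL L).
Local Notation O := (@XL_open L).
Local Notation Xle := (@XL_le L).

Lemma phi_prime (x : X) : prime_filter (fun a => phi a x).
Proof. exact (proj2_sig x). Qed.

Lemma phi_up {a b} {x : X} : phi a x -> a ⊑ b -> phi b x.
Proof. apply (pf_up (phi_prime x)). Qed.

Lemma phi_meet a b (x : X) : phi (meet a b) x <-> phi a x /\ phi b x.
Proof. apply (pf_meet (phi_prime x)). Qed.

Lemma phi_join a b (x : X) : phi (join a b) x <-> phi a x \/ phi b x.
Proof. apply (pf_join (phi_prime x)). Qed.

Lemma phi_top (x : X) : phi top x.
Proof. apply (pf_top (phi_prime x)). Qed.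

Lemma phi_bot (x : X) : ~ phi bot x.
Proof. apply (pf_not_bot (phi_prime x)). Qed.

Lemma phi_ljoin {l} {x : X} : phi (ljoin l) x -> exists t, In t l /\ phi t x.
Proof. apply (pf_ljoin (phi_prime x)). Qed.

Lemma phi_lmeet l (x : X) : phi (lmeet l) x <-> forall t, In t l -> phi t x.
Proof. apply (pf_lmeet (phi_prime x)). Qed.

Lemma prime_filter_theorem {F I} :
  is_filter F -> is_ideal I -> disjoint F I ->
  exists x : X, subset F (fun a => phi a x) /\ forall a, I a -> ~ phi a x.
Proof.
  intros HF HI D.
  destruct (maximal_disjoint_ideal_exists HI D) as [J [IJ HJ]].
  exists (exist _ _ (maximal_disjoint_ideal_prime HF HJ)). unfold phi; simpl. split.
  - intros a Fa Ja. exact (proj1 (proj2 HJ) a Fa Ja).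
  - intros a Ia h. apply h, IJ, Ia.
Qed.

Lemma phi_separate {a b} : ~ a ⊑ b -> exists x : X, phi a x /\ ~ phi b x.
Proof.
  intro H. destruct (@prime_filter_theorem (up a) (down b)) as [x [h1 h2]].
  - apply up_filter.
  - apply down_ideal.
  - intros c h h'. apply H. eapply le_trans; eauto.
  - exists x. split; [apply h1, fle_refl|apply h2, fle_refl].
Qed.

Lemma phi_le {a b} : subset (phi a) (phi b) -> a ⊑ b.
Proof. intro H. apply NNPP. intro N. destruct (phi_separate N) as [x [h1 h2]]. auto. Qed.

Lemma phi_cover {b} {S : L -> Prop} :
  (forall x : X, phi b x -> exists s, S s /\ phi s x) ->
  exists T, (forall t, In t T -> S t) /\ b ⊑ ljoin T.
Proof.
  intro H. apply NNPP. intro N.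
  destruct (@prime_filter_theorem (up b) (ideal_gen S)) as [x [h1 h2]].
  - apply up_filter.
  - apply ideal_gen_ideal.
  - intros c h [T [k1 k2]]. apply N. exists T. split; [exact k1|eapply le_trans; eauto].
  - destruct (H x (h1 b (fle_refl b))) as [s [hs hx]].
    apply (h2 s); [|exact hx]. exists (s :: nil).
    split; [intros t [<-|[]]; exact hs|apply ljoin_ub; left; auto].
Qed.

Lemma XL_ext {x y : X} : (forall a, phi a x <-> phi a y) -> x = y.
Proof.
  destruct x as [x hx], y as [y hy]. unfold phi; simpl. intro H.
  assert (x = y) as <-
    by (apply boolp.funext; intro a; apply boolp.propext; apply H).
  f_equal. apply proof_irrelevance.
Qed.

Lemma downset_phi_diff c d (z : X) :
  (exists y : X, Xle z y /\ phi c y /\ ~ phi d y) <-> ~ phi (imp c d) z.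
Proof.
  split.
  - intros [y [zy [hc hd]]] h. apply hd. apply (phi_up (a := meet (imp c d) c)).
    + apply phi_meet. split; [apply zy, h|exact hc].
    + apply imp_mp.
  - intro N.
    set (F := fun e => exists f, phi f z /\ meet f c ⊑ e).
    destruct (@prime_filter_theorem F (down d)) as [y [h1 h2]].
    + split; [|split].
      * intros e e' [f [k1 k2]] k. exists f. split; [exact k1|eapply le_trans; eauto].
      * exists top. split; [apply phi_top|apply le_top].
      * intros e e' [f [k1 k2]] [f' [k1' k2']]. exists (meet f f'). split.
        -- apply phi_meet; auto.
        -- apply fmeet_glb; [eapply le_trans; [|exact k2]|eapply le_trans; [|exact k2']];
             apply meet_mono; auto.
    + apply down_ideal.
    + intros e [f [k1 k2]] k. apply N. apply (phi_up (a := f)); [exact k1|].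
      apply imp_intro. eapply le_trans; eauto.
    + exists y. split; [|split].
      * intros a ha. apply h1. exists a. split; auto.
      * apply h1. exists top. split; [apply phi_top|auto].
      * apply h2, fle_refl.
Qed.

Definition basic (c d : L) : X -> Prop := fun x => phi c x /\ ~ phi d x.

Lemma open_of_basics (V : X -> Prop) :
  (forall z, V z -> exists c d, basic c d z /\ subset (basic c d) V) -> O V.
Proof.
  intros H z Vz. destruct (H z Vz) as [c [d [[h1 h2] h3]]].
  exists (phi c :: (fun x => ~ phi d x) :: nil). split; [|split].
  - intros S [<-|[<-|[]]]; [exists c; left|exists d; right]; tauto.
  - intros S [<-|[<-|[]]]; auto.
  - intros w Hw. apply h3. split; [apply (Hw (phi c))|apply (Hw (fun x => ~ phi d x))];
      simpl; auto.
Qed.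

Lemma subbasic_meet_basic {l : list (X -> Prop)} :
  (forall S, In S l -> XL_subbasic S) ->
  exists c d, forall z, (forall S, In S l -> S z) <-> basic c d z.
Proof.
  induction l as [|S l IH]; intro H.
  - exists top, bot. intro z. split; [intros _; split; [apply phi_top|apply phi_bot]|].
    intros _ S [].
  - destruct IH as [c [d IH]]; [intros; apply H; right; auto|].
    destruct (H S (or_introl eq_refl)) as [a [Ha|Ha]].
    + exists (meet c a), d. intro z. unfold basic in *. rewrite phi_meet.
      specialize (IH z). specialize (Ha z). split.
      * intro h. assert (hl : forall S, In S l -> S z) by (intros; apply h; right; auto).
        assert (S z) by (apply h; left; auto). tauto.
      * intros hz S' [<-|h]; [tauto|]. apply (proj2 IH); tauto.
    + exists c, (join d a). intro z. unfold basic in *. rewrite phi_join.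
      specialize (IH z). specialize (Ha z). split.
      * intro h. assert (hl : forall S, In S l -> S z) by (intros; apply h; right; auto).
        assert (S z) by (apply h; left; auto). tauto.
      * intros hz S' [<-|h]; [tauto|]. apply (proj2 IH); tauto.
Qed.

Lemma open_basic {U : X -> Prop} {x : X} :
  O U -> U x -> exists c d, basic c d x /\ subset (basic c d) U.
Proof.
  intros HU Ux. destruct (HU x Ux) as [l [h1 [h2 h3]]].
  destruct (subbasic_meet_basic h1) as [c [d H]]. exists c, d.
  split; [apply (proj1 (H x)), h2|]. intros w hw. apply h3, (proj2 (H w)), hw.
Qed.

Lemma open_ext {U V : X -> Prop} : (forall x, U x <-> V x) -> O U -> O V.
Proof.
  intros E HU. apply open_of_basics. intros z Vz. apply E in Vz.
  destruct (open_basic HU Vz) as [c [d [h1 h2]]]. exists c, d.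
  split; [exact h1|]. intros w hw. apply E, h2, hw.
Qed.

Lemma clopen_ext {U V : X -> Prop} : (forall x, U x <-> V x) -> clopen O U -> clopen O V.
Proof.
  intros E [h1 h2]. split; [eapply open_ext; eauto|].
  eapply open_ext; [|exact h2]. intro x. specialize (E x). tauto.
Qed.

Lemma basic_open c d : O (basic c d).
Proof. apply open_of_basics. intros z hz. exists c, d. split; [exact hz|intros w hw; exact hw]. Qed.

Lemma clopen_basic c d : clopen O (basic c d).
Proof.
  split; [apply basic_open|]. apply open_of_basics. intros z hz. unfold basic in hz.
  destruct (classic (phi c z)) as [k|k].
  - assert (phi d z) by tauto. exists d, bot. split; [split; [auto|apply phi_bot]|].
    intros w [k1 _] [_ k2]. auto.
  - exists top, c. split; [split; [apply phi_top|exact k]|]. intros w [_ k1] [k2 _]. auto.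
Qed.

Lemma open_phi a : O (phi a).
Proof.
  apply (open_ext (U := basic a bot)); [|apply basic_open].
  intro x. unfold basic. pose proof (phi_bot x). tauto.
Qed.

Lemma open_not_phi a : O (fun x => ~ phi a x).
Proof.
  apply (open_ext (U := basic top a)); [|apply basic_open].
  intro x. unfold basic. pose proof (phi_top x). tauto.
Qed.

Lemma clopen_not_phi a : clopen O (fun x => ~ phi a x).
Proof.
  split; [apply open_not_phi|].
  eapply open_ext; [|apply (open_phi a)]. intro x. split; [tauto|apply NNPP].
Qed.

Lemma clopen_upset_phi a : clopen_upset O Xle (phi a).
Proof.
  split; [split; [apply open_phi|apply open_not_phi]|].
  intros x y h1 h2. apply h2, h1.
Qed.

Lemma open_complement_closed {W : X -> Prop} : O W -> closed_set O (fun x => ~ W x).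
Proof. intro H. eapply open_ext; [|exact H]. intro x. split; [tauto|apply NNPP]. Qed.

Lemma XL_topology : is_topology O.
Proof.
  split; [|split].
  - eapply open_ext; [|apply (open_phi top)]. intro x. pose proof (phi_top x). tauto.
  - intros U V HU HV. apply open_of_basics. intros z [hU hV].
    destruct (open_basic HU hU) as [c [d [[h1 h2] h3]]].
    destruct (open_basic HV hV) as [c' [d' [[h1' h2'] h3']]].
    exists (meet c c'), (join d d'). unfold basic. rewrite phi_meet, phi_join.
    split; [tauto|]. intros w. unfold basic. rewrite phi_meet, phi_join. intros [[k1 k2] k3].
    split; [apply h3|apply h3']; split; tauto.
  - intros C HC. apply open_of_basics. intros z [U [hC hU]].
    destruct (open_basic (HC U hC) hU) as [c [d [h1 h2]]].
    exists c, d. split; [exact h1|]. intros w hw. exists U. split; [exact hC|apply h2, hw].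
Qed.

(* A subbasic cover with no finite subcover would leave the filter generated by the
   b with -phi b in the cover disjoint from the ideal generated by the a with phi a
   in it; a prime filter separating them is an uncovered point. *)
Lemma XL_subbasic_cover_finite (C : (X -> Prop) -> Prop) :
  (forall S, C S -> XL_subbasic S) -> (forall x, exists S, C S /\ S x) ->
  finite_subcover C (fun _ => True).
Proof.
  intros HCB Hcov.
  set (Rpos := fun a U => C U /\ forall z, U z <-> phi a z).
  set (Rneg := fun b U => C U /\ forall z, U z <-> ~ phi b z).
  set (F := filter_gen (fun b => exists U, Rneg b U)).
  set (I := ideal_gen (fun a => exists U, Rpos a U)).
  destruct (classic (exists c, F c /\ I c)) as [[c [[lb [hb1 hb2]] [la [ha1 ha2]]]]|D].
  - destruct (list_choice (R := Rpos) ha1) as [lU [u1 u2]].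
    destruct (list_choice (R := Rneg) hb1) as [lV [v1 v2]].
    exists (lU ++ lV). split.
    + intros U k. apply in_app_or in k as [k|k];
        [destruct (u1 U k) as [? [? [? _]]]|destruct (v1 U k) as [? [? [? _]]]]; auto.
    + intros z _. destruct (classic (forall b, In b lb -> phi b z)) as [k|k].
      * assert (k' : phi (ljoin la) z)
          by (apply (phi_up (a := lmeet lb)); [apply phi_lmeet; auto|eapply le_trans; eauto]).
        apply phi_ljoin in k' as [a [ha hz]]. destruct (u2 a ha) as [U [hU [_ EU]]].
        exists U. split; [apply in_or_app; auto|apply EU, hz].
      * apply not_all_ex_not in k as [b k]. apply imply_to_and in k as [hb nb].
        destruct (v2 b hb) as [V [hV [_ EV]]].
        exists V. split; [apply in_or_app; auto|apply EV, nb].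
  - destruct (@prime_filter_theorem F I) as [x [h1 h2]].
    + apply filter_gen_filter.
    + apply ideal_gen_ideal.
    + intros c Fc Ic. apply D. eauto.
    + exfalso. destruct (Hcov x) as [U [hC hU]]. destruct (HCB U hC) as [a [Ha|Ha]].
      * apply (h2 a); [|apply Ha, hU]. exists (a :: nil).
        split; [intros t [<-|[]]; exists U; split; auto|apply ljoin_ub; left; auto].
      * apply (proj1 (Ha x) hU), h1. exists (a :: nil).
        split; [intros t [<-|[]]; exists U; split; auto|apply fmeet_lb_l].
Qed.

Lemma XL_compact : compact_set O (fun _ => True).
Proof. exact (alexander_subbasis (@XL_subbasic L) XL_subbasic_cover_finite). Qed.

Lemma XL_closed_compact {K} : closed_set O K -> compact_set O K.
Proof. apply closed_compact, XL_compact. Qed.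

(* Compactness of the complement of W turns "x is below no point outside W" into a
   single element of x whose phi avoids the complement. *)
Lemma open_upset_phi_nbhd {W : X -> Prop} {x} :
  O W -> upset Xle W -> W x -> exists a, phi a x /\ subset (phi a) W.
Proof.
  intros HW HU Wx.
  destruct (XL_closed_compact (open_complement_closed HW)
     (fun U => exists a, phi a x /\ U = (fun z => ~ phi a z))) as [l [l1 l2]].
  - intros U [a [_ ->]]. apply open_not_phi.
  - intros z nW. assert (N : ~ Xle x z) by (intro h; apply nW; eapply HU; eauto).
    apply not_all_ex_not in N as [a N]. apply imply_to_and in N as [ha na].
    exists (fun z => ~ phi a z). split; [exists a; auto|exact na].
  - destruct (list_choice (R := fun U a => phi a x /\ U = (fun z => ~ phi a z)) l1)
      as [la [h1 h2]].
    exists (lmeet la). split.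
    + apply phi_lmeet. intros a ha. destruct (h1 a ha) as [U [_ [? _]]]. auto.
    + intros z hz. apply NNPP. intro nW. destruct (l2 z nW) as [U [k1 k2]].
      destruct (h2 U k1) as [a [k3 [_ ->]]]. apply k2. apply (proj1 (phi_lmeet la z) hz), k3.
Qed.

Lemma clopen_upset_phi_iff {U : X -> Prop} :
  clopen_upset O Xle U -> exists a, forall z, U z <-> phi a z.
Proof.
  intros [[HO HC] HU].
  assert (HUc : closed_set O U) by (eapply open_ext; [|exact HC]; intro; tauto).
  destruct (XL_closed_compact HUc (fun V => exists a, subset (phi a) U /\ V = phi a))
    as [l [l1 l2]].
  - intros V [a [_ ->]]. apply open_phi.
  - intros z Uz. destruct (open_upset_phi_nbhd HO HU Uz) as [a [h1 h2]].
    exists (phi a). split; [exists a|]; auto.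
  - destruct (list_choice (R := fun V a => subset (phi a) U /\ V = phi a) l1)
      as [la [h1 h2]].
    exists (ljoin la). intro z. split.
    + intro Uz. destruct (l2 z Uz) as [V [k1 k2]]. destruct (h2 V k1) as [a [k3 [_ ->]]].
      eapply phi_up; [exact k2|apply ljoin_ub, k3].
    + intro h. apply phi_ljoin in h as [a [k1 k2]].
      destruct (h1 a k1) as [V [_ [hV _]]]. apply hV, k2.
Qed.

(* Esakia: a clopen A is a finite union of basic sets phi c \ phi d, and the downset of
   each of them is the complement of phi (c -> d). *)
Lemma downset_clopen (A : X -> Prop) : clopen O A -> clopen O (downset_of Xle A).
Proof.
  intros [HO HC].
  destruct (XL_closed_compact HC
      (fun V => exists p : L * L, subset (basic (fst p) (snd p)) A /\ V = basic (fst p) (snd p)))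
    as [l [l1 l2]].
  - intros V [p [_ ->]]. apply basic_open.
  - intros z Az. destruct (open_basic HO Az) as [c [d [h1 h2]]].
    exists (basic c d). split; [exists (c, d); auto|exact h1].
  - destruct (list_choice
      (R := fun V (p : L * L) => subset (basic (fst p) (snd p)) A /\ V = basic (fst p) (snd p)) l1)
      as [ps [h1 h2]].
    set (m := lmeet (map (fun p => imp (fst p) (snd p)) ps)).
    apply (clopen_ext (U := fun z => ~ phi m z)); [|apply clopen_not_phi].
    intro z. unfold m. rewrite phi_lmeet. split.
    + intro N. apply not_all_ex_not in N as [t N]. apply imply_to_and in N as [N1 N2].
      apply in_map_iff in N1 as [p [<- N1]].
      apply downset_phi_diff in N2 as [y [k1 k2]]. exists y. split; [|exact k1].
      destruct (h1 p N1) as [V [_ [hA _]]]. apply hA, k2.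
    + intros [y [Ay zy]] N. destruct (l2 y Ay) as [V [k1 k2]].
      destruct (h2 V k1) as [p [hp [_ ->]]].
      apply (proj1 (downset_phi_diff (fst p) (snd p) z)); [exists y; auto|].
      apply N, in_map_iff. exists p; auto.
Qed.

Lemma closure_phi_union (S : L -> Prop) (x : X) :
  closure O (fun y => exists a, S a /\ phi a y) x <-> phi (sup S) x.
Proof.
  split.
  - intro H. apply NNPP. intro N.
    destruct (H _ (open_not_phi (sup S)) N) as [y [h1 [a [h2 h3]]]].
    apply h1. eapply phi_up; [exact h3|apply fsup_ub, h2].
  - intros H U HU Ux. destruct (open_basic HU Ux) as [c [d [[h1 h2] h3]]].
    apply NNPP. intro N. apply h2.
    apply (phi_up (a := meet c (sup S))); [apply phi_meet; auto|].
    apply meet_sup_le. intros s hs. apply phi_le. intros y hy. apply NNPP. intro nd.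
    apply phi_meet in hy as [hc hs']. apply N. exists y. split; [apply h3; split; auto|eauto].
Qed.

Lemma closure_ext {A B : X -> Prop} {x} :
  (forall z, A z <-> B z) -> closure O A x -> closure O B x.
Proof.
  intros E H U HU Ux. destruct (H U HU Ux) as [y [h1 h2]]. exists y. split; [|apply E]; auto.
Qed.

Lemma closure_mono {A B : X -> Prop} {x} : subset A B -> closure O A x -> closure O B x.
Proof. intros E H U HU Ux. destruct (H U HU Ux) as [y [h1 h2]]. exists y. auto. Qed.

Lemma closure_open_upset {W : X -> Prop} (x : X) : O W -> upset Xle W ->
  (closure O W x <-> phi (sup (fun a => subset (phi a) W)) x).
Proof.
  intros HW HU. rewrite <- closure_phi_union.
  assert (E : forall z, W z <-> exists a, subset (phi a) W /\ phi a z).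
  { intro z. split; [|intros [a [h1 h2]]; auto].
    intro Wz. destruct (open_upset_phi_nbhd HW HU Wz) as [a [? ?]]. eauto. }
  split; apply closure_ext; intro z; [|symmetry]; apply E.
Qed.

Lemma XL_priestley : priestley_space O Xle.
Proof.
  split; [split; [apply XL_topology|split; [apply XL_compact|split]]|split].
  - intros x y nxy.
    assert (N : ~ forall a, phi a x <-> phi a y) by (intro h; apply nxy, XL_ext, h).
    apply not_all_ex_not in N as [a N].
    destruct (classic (phi a x)) as [h|h].
    + exists (phi a), (fun z => ~ phi a z).
      repeat split; [apply open_phi|apply open_not_phi|exact h|tauto|tauto].
    + exists (fun z => ~ phi a z), (phi a).
      repeat split; [apply open_not_phi|apply open_phi|exact h|tauto|tauto].
  - intros U HU x Ux. destruct (open_basic HU Ux) as [c [d [h1 h2]]].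
    exists (basic c d). split; [apply clopen_basic|split; [exact h1|exact h2]].
  - split; [|split].
    + intros x a h; exact h.
    + intros x y z h1 h2 a h; auto.
    + intros x y h1 h2. apply XL_ext. intro a. split; [apply h1|apply h2].
  - intros x y N. apply not_all_ex_not in N as [a N]. apply imply_to_and in N.
    exists (phi a). split; [apply clopen_upset_phi|exact N].
Qed.

Lemma XL_L_space : L_space O Xle.
Proof.
  split; [apply XL_priestley|split; [apply downset_clopen|]].
  intros W HW HU. apply (open_ext (U := phi (sup (fun a => subset (phi a) W)))); [|apply open_phi].
  intro x. symmetry. apply (closure_open_upset x HW HU).
Qed.

(** * Spatial points, Scott upsets and kernels *)

Definition completely_prime (x : X) : Prop :=
  forall S, phi (sup S) x -> exists s, S s /\ phi s x.

(* The downset of a completely prime x is the complement of phi of the join of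
   everything outside x. *)
Lemma completely_prime_spatial {x : X} : completely_prime x -> spatial_pt O Xle x.
Proof.
  intro H. set (s0 := sup (fun a => ~ phi a x)).
  apply (clopen_ext (U := fun z => ~ phi s0 z)); [|apply clopen_not_phi].
  intro z. split.
  - intro h. exists x. split; [reflexivity|]. intros a ha. apply NNPP. intro na. apply h.
    eapply phi_up; [exact ha|apply fsup_ub, na].
  - intros [y [-> h]] h'. destruct (H _ (h _ h')) as [s [h1 h2]]. auto.
Qed.

Lemma spatial_completely_prime {x : X} : spatial_pt O Xle x -> completely_prime x.
Proof.
  intros [HO HC].
  set (D := downset_of Xle (fun w => w = x)).
  destruct (@clopen_upset_phi_iff (fun z => ~ D z)) as [s0 E].
  { split; [split; [exact HC|]|].
    - eapply open_ext; [|exact HO]. intro z. split; [tauto|apply NNPP].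
    - intros z w nz zw [y [-> h]]. apply nz. exists x. split; [reflexivity|].
      intros a ha. apply h, zw, ha. }
  assert (Dx : D x) by (exists x; split; [reflexivity|intros a h; exact h]).
  intros S hS. apply NNPP. intro N.
  assert (K : forall t, S t -> t ⊑ s0).
  { intros t ht. apply NNPP. intro nt. destruct (phi_separate nt) as [z [z1 z2]].
    assert (Dz : D z) by (apply NNPP; intro nD; apply z2, E, nD).
    destruct Dz as [y [-> zy]]. apply N. exists t. split; [exact ht|apply zy, z1]. }
  apply (proj2 (E x)); [|exact Dx]. eapply phi_up; [exact hS|]. apply fsup_least, K.
Qed.

Lemma compact_point_exists {k I} :
  compact_el k -> is_ideal I -> disjoint (up k) I ->
  exists x : X, completely_prime x /\ phi k x /\ forall a, I a -> ~ phi a x.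
Proof.
  intros Hk HI D.
  destruct (maximal_disjoint_ideal_exists HI D) as [J [IJ HJ]].
  exists (exist _ _ (maximal_disjoint_ideal_prime (up_filter k) HJ)). unfold phi; simpl.
  split; [|split].
  - intros S hS. exact (maximal_disjoint_ideal_completely_prime S Hk HJ hS).
  - intro Jk. exact (proj1 (proj2 HJ) k (fle_refl k) Jk).
  - intros a Ia h. apply h, IJ, Ia.
Qed.

(* A minimal point x of phi k is completely prime: the complement of x is an ideal
   missing k, and the completely prime point it yields lies below x. *)
Lemma phi_compact_scott {k} : compact_el k -> clopen_scott_upset O Xle (phi k).
Proof.
  intro Hk. split; [apply clopen_upset_phi|]. split; [apply clopen_upset_phi|].
  split; [apply clopen_upset_phi|].
  intros x [hx Hmin]. apply completely_prime_spatial.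
  destruct (@compact_point_exists k (fun a => ~ phi a x)) as [y [hy [ky yx]]].
  - exact Hk.
  - split; [|split].
    + intros a b nb h ha. apply nb. eapply phi_up; eauto.
    + apply phi_bot.
    + intros a b na nb h. apply phi_join in h as [h|h]; auto.
  - intros a h1 h2. apply h2. eapply phi_up; eauto.
  - assert (E : y = x).
    { apply Hmin; [exact ky|]. intros a ha. apply NNPP. intro na. apply (yx a na ha). }
    rewrite <- E. exact hy.
Qed.

Lemma sp_way_below_phi b a : sp_way_below O Xle (phi b) (phi a) <-> wb b a.
Proof.
  split.
  - intros H S hS.
    set (W := fun z => exists s, S s /\ phi s z).
    assert (HW : O W).
    { eapply open_ext; [|apply (proj2 (proj2 XL_topology) (fun U => exists s, S s /\ U = phi s))].
      - intro z. split; [intros [U [[t [ht ->]] hz]]; exists t; auto|].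
        intros [t [ht hz]]. exists (phi t). eauto.
      - intros U [s [_ ->]]. apply open_phi. }
    assert (HU : upset Xle W)
      by (intros z w [s [h1 h2]] zw; exists s; split; [exact h1|apply zw, h2]).
    apply phi_cover. apply (H W HW HU).
    intros x hx. apply closure_phi_union. eapply phi_up; eauto.
  - intros H W HW HU Hcl x hb.
    destruct (H (fun a => subset (phi a) W)) as [T [h1 h2]].
    + apply phi_le. intros z hz. apply (closure_open_upset z HW HU), Hcl, hz.
    + assert (k : phi (ljoin T) x) by (eapply phi_up; eauto).
      apply phi_ljoin in k as [t [k1 k2]]. apply (h1 t k1), k2.
Qed.

Lemma ker_phi {U a} : (forall z, U z <-> phi a z) ->
  forall x, ker O Xle U x <-> exists b, wb b a /\ phi b x.
Proof.
  intros E x. split.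
  - intros [V [HV [Hwb Vx]]]. destruct (clopen_upset_phi_iff HV) as [b Eb].
    exists b. split; [|apply Eb, Vx].
    apply sp_way_below_phi. intros W HW HU Hcl z hz. apply (Hwb W HW HU).
    + intros y Uy. apply Hcl, E, Uy.
    + apply Eb, hz.
  - intros [b [h1 h2]]. exists (phi b). split; [apply clopen_upset_phi|split; [|exact h2]].
    intros W HW HU Hcl. apply (proj2 (sp_way_below_phi b a) h1 W HW HU).
    intros y hy. apply Hcl, E, hy.
Qed.

Lemma XL_algebraic (Halg : algebraic_frame L) : algebraic_L_space O Xle.
Proof.
  split; [apply XL_L_space|].
  intros U HU x Ux. destruct (clopen_upset_phi_iff HU) as [a E].
  apply (closure_mono (A := fun y => exists k, (compact_el k /\ k ⊑ a) /\ phi k y)).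
  - intros y [k [[h1 h2] h3]]. exists (phi k). split; [apply phi_compact_scott, h1|].
    split; [|exact h3]. intros z hz. apply E. eapply phi_up; eauto.
  - apply closure_phi_union. rewrite <- (Halg a). apply E, Ux.
Qed.

Lemma arithmetic_frame_iff_XL (Halg : algebraic_frame L) :
  arithmetic_frame L <-> arithmetic_L_space O Xle.
Proof.
  assert (Emeet : forall a c z, phi a z /\ phi c z <-> phi (meet a c) z)
    by (intros; symmetry; apply phi_meet).
  split.
  - intros [_ Hst]. split; [apply XL_algebraic, Halg|].
    intros U V HU HV x.
    destruct (clopen_upset_phi_iff HU) as [a Ea]. destruct (clopen_upset_phi_iff HV) as [c Ec].
    assert (Eac : forall z, U z /\ V z <-> phi (meet a c) z)
      by (intro z; rewrite Ea, Ec; apply Emeet).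
    rewrite (ker_phi Eac), (ker_phi Ea), (ker_phi Ec). split.
    + intros [b [h1 h2]]. split; exists b; (split; [|exact h2]);
        [apply (wb_mono_r (fmeet_lb_l a c))|apply (wb_mono_r (fmeet_lb_r a c))]; exact h1.
    + intros [[b1 [h1 h2]] [b2 [k1 k2]]]. exists (meet b1 b2).
      split; [|apply phi_meet; auto].
      apply Hst; [eapply wb_mono_l; [|exact h1]|eapply wb_mono_l; [|exact k1]]; auto.
  - intros [_ Hker]. split; [exact Halg|]. intros b a c Ha Hc.
    assert (H : forall x, phi b x -> exists d, wb d (meet a c) /\ phi d x).
    { intros x hx. apply (ker_phi (Emeet a c)).
      apply (Hker _ _ (clopen_upset_phi a) (clopen_upset_phi c)).
      split; apply (ker_phi (fun z => iff_refl _)); exists b; auto. }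
    destruct (phi_cover H) as [T [h1 h2]].
    eapply wb_mono_l; [exact h2|]. apply wb_ljoin, h1.
Qed.

(** * The spatial part Y_L *)

Local Notation Y := (YL L).
Local Notation OY := (@YL_open L).

Definition psi (a : L) (y : Y) : Prop := phi a (proj1_sig y).

Lemma YL_open_iff V : OY V <-> exists a, forall y, V y <-> psi a y.
Proof.
  split.
  - intros [U [HU E]]. destruct (clopen_upset_phi_iff HU) as [a Ea]. exists a.
    intro y. rewrite E, Ea. reflexivity.
  - intros [a E]. exists (phi a). split; [apply clopen_upset_phi|exact E].
Qed.

Lemma psi_open a : OY (psi a).
Proof. apply YL_open_iff. exists a. reflexivity. Qed.

Lemma psi_up {a b} {y : Y} : psi a y -> a ⊑ b -> psi b y.
Proof. apply phi_up. Qed.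

Lemma psi_meet a b (y : Y) : psi (meet a b) y <-> psi a y /\ psi b y.
Proof. apply phi_meet. Qed.

Lemma YL_completely_prime (y : Y) : completely_prime (proj1_sig y).
Proof. apply spatial_completely_prime, (proj2_sig y). Qed.

Lemma YL_separate (Halg : algebraic_frame L) {a b} :
  ~ a ⊑ b -> exists y : Y, psi a y /\ ~ psi b y.
Proof.
  intro N.
  assert (Hk : exists k, compact_el k /\ k ⊑ a /\ ~ k ⊑ b).
  { apply NNPP. intro N'. apply N. rewrite (Halg a). apply fsup_least.
    intros k [h1 h2]. apply NNPP. intro h3. apply N'. exists k. auto. }
  destruct Hk as [k [hk1 [hk2 hk3]]].
  destruct (@compact_point_exists k (down b)) as [x [cx [kx bx]]].
  - exact hk1.
  - apply down_ideal.
  - intros c h1 h2. apply hk3. eapply le_trans; eauto.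
  - exists (exist _ x (completely_prime_spatial cx)). unfold psi; simpl.
    split; [eapply phi_up; eauto|apply bx, fle_refl].
Qed.

Lemma psi_le (Halg : algebraic_frame L) {a b} : subset (psi a) (psi b) -> a ⊑ b.
Proof.
  intro H. apply NNPP. intro N. destruct (YL_separate Halg N) as [y [h1 h2]]. auto.
Qed.

Lemma YL_ext {y1 y2 : Y} : (forall a, psi a y1 <-> psi a y2) -> y1 = y2.
Proof.
  destruct y1 as [x1 h1], y2 as [x2 h2]. unfold psi; simpl. intro H.
  assert (x1 = x2) as <- by (apply XL_ext, H). f_equal. apply proof_irrelevance.
Qed.

Lemma YL_compact_iff (Halg : algebraic_frame L) {K a} :
  (forall y, K y <-> psi a y) -> compact_set OY K <-> compact_el a.
Proof.
  intro E. split.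
  - intros HK S hS.
    destruct (HK (fun U => exists s, S s /\ U = psi s)) as [l [l1 l2]].
    + intros U [s [_ ->]]. apply psi_open.
    + intros y Ky. apply E in Ky.
      destruct (YL_completely_prime y S (psi_up Ky hS)) as [s [h1 h2]].
      exists (psi s). split; [exists s|]; auto.
    + destruct (list_choice (R := fun U s => S s /\ U = psi s) l1) as [la [h1 h2]].
      exists la. split; [intros s hs; destruct (h1 s hs) as [? [_ [? _]]]; auto|].
      apply (psi_le Halg). intros y hy.
      destruct (l2 y (proj2 (E y) hy)) as [U [k1 k2]].
      destruct (h2 U k1) as [s [k3 [_ ->]]]. eapply psi_up; [exact k2|apply ljoin_ub, k3].
  - intros Ha C HC Hcov.
    set (S := fun c => exists U, C U /\ forall y, U y <-> psi c y).
    destruct (Ha S) as [T [h1 h2]].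
    + apply (psi_le Halg). intros y hy. destruct (Hcov y (proj2 (E y) hy)) as [U [k1 k2]].
      destruct (proj1 (YL_open_iff U) (HC U k1)) as [c Ec].
      eapply psi_up; [apply Ec, k2|]. apply fsup_ub. exists U. auto.
    + destruct (list_choice (R := fun t U => C U /\ forall y, U y <-> psi t y) h1)
        as [lU [u1 u2]].
      exists lU. split; [intros U hU; destruct (u1 U hU) as [? [_ [? _]]]; auto|].
      intros y Ky. apply E in Ky. apply (fun h => psi_up h h2), phi_ljoin in Ky as [t [ht hy]].
      destruct (u2 t ht) as [U [hU [_ EU]]]. exists U. split; [exact hU|apply EU, hy].
Qed.

Lemma YL_closure_point (w z : Y) :
  closure OY (fun v => v = w) z <-> forall c, psi c z -> psi c w.
Proof.
  split.
  - intros H c hc. destruct (H (psi c) (psi_open c) hc) as [v [h1 ->]]. exact h1.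
  - intros H U HU Uz. destruct (proj1 (YL_open_iff U) HU) as [c Ec].
    exists w. split; [apply Ec, H, Ec, Uz|reflexivity].
Qed.

(* If F is irreducible with complement psi a, the elements not below a form a prime
   filter: a meet below a splits F into the two closed sets -psi b and -psi c. *)
Lemma irreducible_not_below_prime (Halg : algebraic_frame L) {F a} :
  irreducible_closed OY F -> (forall y, F y <-> ~ psi a y) ->
  prime_filter (fun t => ~ t ⊑ a).
Proof.
  intros [_ [[y1 Fy1] Hirr]] EF.
  assert (CG : forall d, closed_set OY (fun y => ~ psi d y)).
  { intro d. apply YL_open_iff. exists d. intro y. split; [apply NNPP|tauto]. }
  split; [|split; [|split; [|split]]].
  - intros t t' h1 h2 h3. apply h1. eapply le_trans; eauto.
  - intro h. apply (proj1 (EF y1) Fy1). eapply psi_up; [apply phi_top|exact h].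
  - intros b c hb hc hbc.
    destruct (Hirr _ _ (CG b) (CG c)) as [G|G].
    + intros y Fy. apply EF in Fy.
      destruct (classic (psi b y)) as [k|k]; [|left; exact k].
      destruct (classic (psi c y)) as [k'|k']; [|right; exact k'].
      exfalso. apply Fy. eapply psi_up; [|exact hbc]. apply psi_meet; auto.
    + apply hb, (psi_le Halg). intros y hy. apply NNPP. intro N. apply (G y); auto. apply EF, N.
    + apply hc, (psi_le Halg). intros y hy. apply NNPP. intro N. apply (G y); auto. apply EF, N.
  - intro h. apply h, bot_le.
  - intros b c h. apply NNPP. intro N. apply h, join_least; apply NNPP; intro; apply N; auto.
Qed.

Lemma not_below_point {a} :
  prime_filter (fun t => ~ t ⊑ a) -> exists y : Y, forall c, psi c y <-> ~ c ⊑ a.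
Proof.
  intro Hp. set (x0 := exist _ _ Hp : X).
  assert (C0 : completely_prime x0).
  { intros S hS. apply NNPP. intro N. apply hS, fsup_least. intros s hs.
    apply NNPP. intro ns. apply N. exists s. auto. }
  exists (exist _ x0 (completely_prime_spatial C0)). reflexivity.
Qed.

Lemma YL_sober (Halg : algebraic_frame L) : sober OY.
Proof.
  intros F HF. pose proof HF as [HFc _].
  destruct (proj1 (YL_open_iff _) HFc) as [a Ea].
  assert (EF : forall y, F y <-> ~ psi a y) by (intro y; rewrite <- Ea; split; [tauto|apply NNPP]).
  destruct (not_below_point (irreducible_not_below_prime Halg HF EF)) as [y0 Py0].
  assert (Key : forall z, F z <-> forall c, psi c z -> psi c y0).
  { intro z. rewrite EF. split.
    - intros nz c hc. apply Py0. intro h. apply nz. eapply psi_up; eauto.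
    - intros H ha. apply (proj1 (Py0 a) (H a ha)), fle_refl. }
  exists y0. split.
  - intro z. rewrite YL_closure_point. apply Key.
  - intros y' Hy'. apply YL_ext. intro c.
    assert (K' : forall z, F z <-> forall c, psi c z -> psi c y')
      by (intro z; rewrite Hy', YL_closure_point; reflexivity).
    split.
    + intro hc. apply Py0. intro h. apply (proj1 (EF y')); [apply K'; auto|eapply psi_up; eauto].
    + intro hc. apply (proj1 (K' y0)); [apply Key; auto|exact hc].
Qed.

Lemma YL_compact_open_basis (Halg : algebraic_frame L) U :
  OY U -> forall y, U y -> exists K, OY K /\ compact_set OY K /\ K y /\ subset K U.
Proof.
  intros HU y Uy. destruct (proj1 (YL_open_iff U) HU) as [a Ea].
  assert (h : psi (sup (fun k => compact_el k /\ k ⊑ a)) y)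
    by (rewrite <- (Halg a); apply Ea, Uy).
  destruct (YL_completely_prime y _ h) as [k [[k1 k2] k3]].
  exists (psi k). split; [apply psi_open|split; [|split; [exact k3|]]].
  - apply (YL_compact_iff Halg (fun y => iff_refl _)), k1.
  - intros z hz. apply Ea. eapply psi_up; eauto.
Qed.

Lemma arithmetic_frame_iff_YL (Halg : algebraic_frame L) :
  arithmetic_frame L <-> stably_compactly_based OY.
Proof.
  assert (Cpsi : forall k, compact_el k <-> compact_set OY (psi k))
    by (intro k; symmetry; apply (YL_compact_iff Halg (fun y => iff_refl _))).
  assert (Emeet : forall k1 k2 y, psi k1 y /\ psi k2 y <-> psi (meet k1 k2) y)
    by (intros; symmetry; apply psi_meet).
  split.
  - intros [_ Hst]. split; [apply YL_sober, Halg|split; [apply YL_compact_open_basis, Halg|]].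
    intros K1 K2 HO1 HC1 HO2 HC2.
    destruct (proj1 (YL_open_iff _) HO1) as [a1 E1].
    destruct (proj1 (YL_open_iff _) HO2) as [a2 E2].
    apply (YL_compact_iff Halg (a := meet a1 a2)); [intro y; rewrite E1, E2; apply Emeet|].
    apply (YL_compact_iff Halg E1) in HC1. apply (YL_compact_iff Halg E2) in HC2.
    apply Hst; [apply (wb_mono_l (fmeet_lb_l a1 a2))|apply (wb_mono_l (fmeet_lb_r a1 a2))];
      assumption.
  - intros [_ [_ Hcap]]. split; [exact Halg|]. intros b a c Ha Hc.
    apply (wb_compact_iff Halg) in Ha as [k1 [h1 [h2 h3]]].
    apply (wb_compact_iff Halg) in Hc as [k2 [k1' [k2' k3']]].
    apply (wb_compact_iff Halg). exists (meet k1 k2). split; [|split].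
    + apply (YL_compact_iff Halg (Emeet k1 k2)).
      apply Hcap; [apply psi_open|apply Cpsi, h1|apply psi_open|apply Cpsi, k1'].
    + apply fmeet_glb; assumption.
    + apply meet_mono; assumption.
Qed.

End Duality.

Theorem theorem5p4 (L : Frame) (Halg : algebraic_frame L) :
  (arithmetic_frame L <-> arithmetic_L_space (@XL_open L) (@XL_le L)) /\
  (arithmetic_L_space (@XL_open L) (@XL_le L) <->
     stably_compactly_based (@YL_open L)).
Proof.
  split; [exact (arithmetic_frame_iff_XL L Halg)|].
  rewrite <- (arithmetic_frame_iff_XL L Halg). exact (arithmetic_frame_iff_YL L Halg).
Qed.
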